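(* Let $(\mathcal{X},\mathcal{E})$ be a measurable space with a positive measure $\mu$, let $\mathcal{K}:\mathcal{X}\times\mathcal{X}\to\mathbb{R}$ be a function, and let $\mathcal{A}$ be a procedure such that for every $k\ge1$ and every $\mathbf{Y}_k=(Y_1,\dots,Y_k)\in\mathcal{X}^k$, $\mathcal{A}(\mathbf{Y}_k)(x)=\frac1k\sum_{i=1}^k\mathcal{K}(x,Y_i)$ for all $x\in\mathcal{X}$, and $\mathcal{A}(\mathbf{Y}_k)$ is a probability density with respect to $\mu$. Let $V\ge2$ and $n=pV$ with $p\ge1$ an integer, let $\mathbf{X}=(X_1,\dots,X_n)\in\mathcal{X}^n$ and partition $\mathbf{X}$ into $V$ disjoint subsamples $\mathbf{X}_1,\dots,\mathbf{X}_V$, each of size $p$, with $\mathbf{X}_j^c=\mathbf{X}\setminus\mathbf{X}_j$. Set $\widehat{s}=\mathcal{A}(\mathbf{X})$ and $\widehat{s}_j=\mathcal{A}(\mathbf{X}_j^c)$. Then for every probability $P_s$ on $\mathcal{X}$, \[ h^2(s,\widehat{s})\le\frac1V\sum_{j=1}^V h^2(s,\widehat{s}_j). \]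
   Context: For probabilities $P,Q$ on $\mathcal{X}$, the Hellinger distance is $h(P,Q)=\left[\frac12\int(\sqrt{dP}-\sqrt{dQ})^2\right]^{1/2}$, where $dP,dQ$ are densities with respect to any dominating measure; for a density $t$ with respect to $\mu$ one writes $h(s,t)$ for $h(P_s,t\cdot\mu)$. A procedure is a measurable mapping from $\bigcup_{k\ge1}\mathcal{X}^k$ to the set of probability densities with respect to $\mu$. *)

From HB Require Import structures.
From mathcomp Require Import all_boot all_order all_algebra.
From mathcomp Require Import all_classical all_reals all_analysis.
Set Implicit Arguments. Unset Strict Implicit. Unset Printing Implicit Defensive.
Import Order.TTheory GRing.Theory Num.Theory.
Local Open Scope classical_set_scope.
Local Open Scope ring_scope.

Definition dens_measure d (T : measurableType d) (R : realType)
  (mu : {measure set T -> \bar R}) (t : T -> R) : set T -> \bar R :=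
  fun A => (\int[mu]_(x in A) (t x)%:E)%E.

Definition is_prob_density d (T : measurableType d) (R : realType)
  (mu : {measure set T -> \bar R}) (t : T -> R) : Prop :=
  [/\ measurable_fun setT t, (forall x, 0 <= t x) &
      (\int[mu]_x (t x)%:E = 1)%E].

Definition hellinger2_values d (T : measurableType d) (R : realType)
  (P Q : set T -> \bar R) : set (\bar R) :=
  [set v | exists (nu : {measure set T -> \bar R}) (f g : T -> R),
     [/\ measurable_fun setT f /\ measurable_fun setT g,
         (forall x, 0 <= f x) /\ (forall x, 0 <= g x),
         (forall A, measurable A ->
            P A = (\int[nu]_(x in A) (f x)%:E)%E /\
            Q A = (\int[nu]_(x in A) (g x)%:E)%E) &
         v = (\int[nu]_x ((2^-1) * (Num.sqrt (f x) - Num.sqrt (g x)) ^+ 2)%:E)%E]].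

(* Squared Hellinger distance h^2(P,Q); the value does not depend on the choice
   of dominating measure, so the supremum is that common value. *)
Definition hellinger2 d (T : measurableType d) (R : realType)
  (P Q : set T -> \bar R) : \bar R :=
  ereal_sup (hellinger2_values P Q).

(* Since shat is the average of the shat_j, every shat_j is a density ratio r_j
   times shat with sum_j r_j = V.  If nu dominates P_s and shat.mu, with
   P_s = f.nu and shat.mu = g.nu, then shat_j.mu = (g r_j).nu, and pointwise
   (sqrt f - sqrt g)^2 <= V^-1 sum_j (sqrt f - sqrt (g r_j))^2 because the
   sqrt r_j have quadratic mean 1, hence arithmetic mean at most 1.
   Integrating against nu bounds each value defining h^2(s, shat). *)

From HB Require Import structures.
From mathcomp Require Import all_boot all_order all_algebra.
From mathcomp Require Import all_classical all_reals all_analysis.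
From mathcomp Require Import measurable_realfun.
From mathcomp Require Import ring.
Set Implicit Arguments. Unset Strict Implicit. Unset Printing Implicit Defensive.
Import Order.TTheory GRing.Theory Num.Theory.
Local Open Scope classical_set_scope.
Local Open Scope ring_scope.

Section leave_block_out.
Variables (T : Type) (n V : nat) (X : 'I_n -> T) (blk : 'I_n -> 'I_V).

Lemma size_leave_block_out (j : 'I_V) :
  size [seq X i | i <- enum 'I_n & blk i != j] = (n - #|[pred i | blk i == j]|)%N.
Proof.
have <- : #|[predC [pred i | blk i == j]]| = (n - #|[pred i | blk i == j]|)%N.
  by rewrite -[X in (X - _)%N](card_ord n) -(cardC [pred i | blk i == j]) addKn.
rewrite size_map size_filter cardE /enum_mem size_filter count_filter.
by apply: eq_count => i; rewrite !inE andbT.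
Qed.

Lemma sum_leave_block_out (M : nmodType) (F : T -> M) :
  \sum_(j < V) \sum_(y <- [seq X i | i <- enum 'I_n & blk i != j]) F y =
  (\sum_(i < n) F (X i)) *+ V.-1.
Proof.
under eq_bigr do rewrite big_map big_filter big_enum_cond /= big_mkcond.
rewrite exchange_big -sumrMnl; apply: eq_bigr => i _.
rewrite -big_mkcond /= sumr_const; congr (_ *+ _).
rewrite -[in RHS](card_ord V) -(cardC1 (blk i)).
by apply: eq_card => j; rewrite !inE eq_sym.
Qed.

Lemma mean_leave_block_out (R : numFieldType) (p : nat) (F : T -> R) :
  n = (p * V)%N -> (1 < V)%N -> (forall j, #|[pred i | blk i == j]| = p) ->
  let mean (s : seq T) := (size s)%:R^-1 * \sum_(y <- s) F y in
  mean [seq X i | i <- enum 'I_n] =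
  V%:R^-1 * \sum_(j < V) mean [seq X i | i <- enum 'I_n & blk i != j].
Proof.
move=> hn hV hblk mean; rewrite /mean.
under [in RHS]eq_bigr do rewrite size_leave_block_out hblk.
rewrite -big_distrr /= sum_leave_block_out size_map size_enum_ord big_map big_enum /=.
have V0 : V%:R != 0 :> R by rewrite pnatr_eq0 -lt0n ltnW.
have V1 : V%:R - 1 != 0 :> R by rewrite subr_eq0 pnatr_eq1 gtn_eqF.
have -> : n%:R = p%:R * V%:R :> R by rewrite hn natrM.
have -> : (n - p)%:R = p%:R * (V%:R - 1) :> R.
  by rewrite hn -[X in (_ - X)%N]muln1 -mulnBr natrM natrB ?(ltnW hV).
rewrite -[_ *+ V.-1]mulr_natr -subn1 natrB ?(ltnW hV) //.
have [->|p0] := eqVneq (p%:R : R) 0; first by rewrite !(mul0r, invr0, mulr0).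
by field; rewrite V0 V1 p0.
Qed.

End leave_block_out.

Section integral_mul_density.
Context d (T : measurableType d) (R : realType).
Local Open Scope ereal_scope.
Import HBNNSimple.

Lemma integral_nnsfun_mul_density (m : {measure set T -> \bar R}) (G : T -> R)
    (E : set T) (h : {nnsfun T >-> R}) :
  (forall x, 0 <= G x)%R -> measurable_fun setT G -> measurable E ->
  \int[m]_(x in E) ((h x)%:E * (G x)%:E) =
  \sum_(r \in range h) (r%:E * \int[m]_(x in E `&` h @^-1` [set r]) (G x)%:E).
Proof.
move=> G0 mG mE; have mGE : measurable_fun E (fun x => (G x)%:E).
  exact/measurable_EFinP/measurable_funTS.
transitivity (\int[m]_(x in E)
   (\sum_(r \in range h) (r * \1_(h @^-1` [set r]) x)%:E * (G x)%:E)).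
  apply: eq_integral => x _.
  rewrite -ge0_mule_fsuml => [|r]; last exact: nnfun_muleindic_ge0.
  by rewrite fsumEFin // -(fimfunE _ x).
rewrite ge0_integral_fsum //; last 2 first.
- move=> r; apply: emeasurable_funM => //.
  by apply/measurable_EFinP; apply: measurable_funM.
- by move=> r x _; rewrite mule_ge0 ?nnfun_muleindic_ge0 ?lee_fin.
apply: eq_fsbigr => r /[!inE] -[t _ <-].
under eq_integral do rewrite EFinM -muleA.
rewrite ge0_integralZl ?lee_fin //.
- congr (_ * _); rewrite integral_mkcondr; apply: eq_integral => x _.
  by rewrite epatch_indic /= muleC.
- apply: emeasurable_funM => //; apply/measurable_EFinP.
  by apply: measurable_indic; exact: measurable_funPTI.
- by move=> x _; rewrite mule_ge0 ?lee_fin.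
Qed.

Lemma integral_mul_density_approx (m : {measure set T -> \bar R}) (G : T -> R)
    (E : set T) (mE : measurable E) (f : T -> \bar R) (mf : measurable_fun E f) :
  (forall x, 0 <= G x)%R -> measurable_fun setT G -> (forall x, 0 <= f x) ->
  \int[m]_(x in E) (f x * (G x)%:E) =
  lim (\int[m]_(x in E) ((nnsfun_approx mE mf n x)%:E * (G x)%:E) @[n --> \oo]).
Proof.
move=> G0 mG f0; set h := nnsfun_approx mE mf.
have fG x : E x -> f x * (G x)%:E = lim ((h n x)%:E * (G x)%:E @[n --> \oo]).
  by move=> Ex; apply/esym/cvg_lim => //; apply: cvgeZr => //; exact: cvg_nnsfun_approx.
under eq_integral => x /[!inE] /fG -> //.
apply: monotone_convergence => //.
- by move=> n; apply: emeasurable_funM; apply/measurable_EFinP/measurable_funTS.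
- by move=> n x Ex; rewrite mule_ge0 ?lee_fin.
- move=> x Ex a b ab; rewrite lee_wpmul2r ?lee_fin //.
  exact/lefP/nd_nnsfun_approx.
Qed.

Lemma eq_integral_mul_density (m1 m2 : {measure set T -> \bar R}) (G1 G2 : T -> R)
    (E : set T) (f : T -> \bar R) :
  (forall x, 0 <= G1 x)%R -> measurable_fun setT G1 ->
  (forall x, 0 <= G2 x)%R -> measurable_fun setT G2 ->
  (forall A, measurable A ->
     \int[m1]_(x in A) (G1 x)%:E = \int[m2]_(x in A) (G2 x)%:E) ->
  measurable E -> (forall x, 0 <= f x) -> measurable_fun E f ->
  \int[m1]_(x in E) (f x * (G1 x)%:E) = \int[m2]_(x in E) (f x * (G2 x)%:E).
Proof.
move=> G10 mG1 G20 mG2 hG mE f0 mf.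
rewrite (integral_mul_density_approx m1 mE mf) ?(integral_mul_density_approx m2 mE mf) //.
congr (lim (_ @ \oo)); apply/funext => n.
rewrite !integral_nnsfun_mul_density //; apply: eq_fsbigr => r _.
by rewrite hG //; apply: measurableI => //; exact: measurable_funPTI.
Qed.

End integral_mul_density.

Lemma sqr_sub_le_mean_sqr_sub (R : realFieldType) (V : nat) (a b : R) (c : 'I_V -> R) :
  (0 < V)%N -> 0 <= a -> 0 <= b -> (forall j, 0 <= c j) ->
  \sum_(j < V) c j ^+ 2 = V%:R ->
  (a - b) ^+ 2 <= V%:R^-1 * \sum_(j < V) (a - b * c j) ^+ 2.
Proof.
move=> V0 a0 b0 c0 hc.
have expand j : (a - b * c j) ^+ 2 =
    (a - b) ^+ 2 + (c j ^+ 2 - 1) * (b ^+ 2 - a * b) + a * b * (c j - 1) ^+ 2.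
  by ring.
have lower j : (a - b) ^+ 2 + (c j ^+ 2 - 1) * (b ^+ 2 - a * b) <= (a - b * c j) ^+ 2.
  by rewrite expand lerDl mulr_ge0 ?sqr_ge0 ?mulr_ge0.
have Vpos : 0 < V%:R :> R by rewrite ltr0n.
rewrite ler_pdivlMl //; apply: le_trans (ler_sum _ (fun j _ => lower j)).
rewrite big_split /= sumr_const card_ord -big_distrl /= sumrB hc sumr_const card_ord.
by rewrite subrr mul0r addr0 mulr_natl.
Qed.

Lemma measurable_inv (R : realType) : measurable_fun [set: R] (@GRing.inv R).
Proof.
have -> : [set: R] = [set x | x != 0] `|` [set 0].
  by apply/seteqP; split => x //= _; case: (eqVneq x 0) => [->|]; [right|left].
apply/measurable_funU => //; first by apply: open_measurable; exact: open_neq.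
split; last exact: measurable_fun_set1.
apply: open_continuous_measurable_fun; first exact: open_neq.
by move=> x; rewrite inE => /inv_continuous.
Qed.

Section hellinger2_average.
Context d (T : measurableType d) (R : realType).
Variable mu : {measure set T -> \bar R}.

Lemma density_ratios_of_average (V : nat) (s : T -> R) (t : 'I_V -> T -> R) :
  (0 < V)%N -> measurable_fun setT s ->
  (forall j, measurable_fun setT (t j)) -> (forall j x, 0 <= t j x) ->
  (forall x, s x = V%:R^-1 * \sum_(j < V) t j x) ->
  exists r : 'I_V -> T -> R,
    [/\ forall j, measurable_fun setT (r j), forall j x, 0 <= r j x,
        forall j x, r j x * s x = t j x & forall x, \sum_(j < V) r j x = V%:R].
Proof.
move=> V0 ms mt t0 s_avg.
have V0' : V%:R != 0 :> R by rewrite pnatr_eq0 -lt0n.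
have s0 x : 0 <= s x by rewrite s_avg mulr_ge0 ?invr_ge0 ?sumr_ge0.
have t_eq0 j x : s x = 0 -> t j x = 0.
  rewrite s_avg => /eqP; rewrite mulf_eq0 invr_eq0 (negbTE V0') /= => /eqP.
  by move/psumr_eq0P => -> // i _; exact: t0.
pose Z := s @^-1` [set 0].
have mZ : measurable Z by rewrite -[Z]setTI; exact: ms.
(* where s vanishes so do all t j, and the ratios are set to 1 *)
exists (fun j x => t j x * (s x)^-1 + \1_Z x); split.
- move=> j; apply: measurable_funD; last exact: measurable_indic.
  by apply: measurable_funM => //; apply: measurableT_comp ms; exact: measurable_inv.
- by move=> j x; rewrite addr_ge0 ?mulr_ge0 ?invr_ge0 // indicE ler0n.
- move=> j x; rewrite indicE; have [sx0|sx0] := eqVneq (s x) 0.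
    by rewrite sx0 mulr0 t_eq0.
  by rewrite memNset /= ?addr0 ?mulfVK //; exact/eqP.
- move=> x; rewrite big_split /= -big_distrl /= sumr_const card_ord indicE.
  have [sx0|sx0] := eqVneq (s x) 0.
    by rewrite big1 ?mul0r ?add0r ?mem_set // => j _; rewrite t_eq0.
  have -> : \sum_j t j x = V%:R * s x by rewrite s_avg mulrA mulfV ?mul1r.
  by rewrite memNset /= ?mul0rn ?addr0 ?mulfK //; exact/eqP.
Qed.

Lemma hellinger2_density_ratio_ub (P : set T -> \bar R) (s t r : T -> R)
    (nu : {measure set T -> \bar R}) (f g : T -> R) :
  measurable_fun setT s -> (forall x, 0 <= s x) ->
  measurable_fun setT r -> (forall x, 0 <= r x) -> (forall x, r x * s x = t x) ->
  measurable_fun setT f -> measurable_fun setT g ->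
  (forall x, 0 <= f x) -> (forall x, 0 <= g x) ->
  (forall A, measurable A ->
     P A = (\int[nu]_(x in A) (f x)%:E)%E /\
     dens_measure mu s A = (\int[nu]_(x in A) (g x)%:E)%E) ->
  (\int[nu]_x (2^-1 * (Num.sqrt (f x) - Num.sqrt (g x * r x)) ^+ 2)%:E
     <= hellinger2 P (dens_measure mu t))%E.
Proof.
move=> ms s0 mr r0 rs mf mg f0 g0 rep.
apply: ereal_sup_ubound; exists nu, f, (fun x => g x * r x); split => //.
- by split=> //; exact: measurable_funM.
- by split=> // x; rewrite mulr_ge0.
move=> A mA; split; first exact: (rep A mA).1.
transitivity (\int[mu]_(x in A) ((r x)%:E * (s x)%:E))%E.
  by apply: eq_integral => x _; rewrite -EFinM rs.
rewrite (@eq_integral_mul_density _ _ _ mu nu s g A (fun x => (r x)%:E)) //.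
- by apply: eq_integral => x _; rewrite -EFinM mulrC.
- by move=> B mB; exact: (rep B mB).2.
- exact/measurable_EFinP/measurable_funTS.
Qed.

Lemma hellinger2_le_mean (P : set T -> \bar R) (V : nat) (s : T -> R)
    (t : 'I_V -> T -> R) :
  (0 < V)%N -> measurable_fun setT s ->
  (forall j, measurable_fun setT (t j)) -> (forall j x, 0 <= t j x) ->
  (forall x, s x = V%:R^-1 * \sum_(j < V) t j x) ->
  (hellinger2 P (dens_measure mu s)
     <= (V%:R^-1)%:E * \sum_(j < V) hellinger2 P (dens_measure mu (t j)))%E.
Proof.
move=> V0 ms mt t0 s_avg.
have s0 x : 0 <= s x by rewrite s_avg mulr_ge0 ?invr_ge0 ?sumr_ge0.
have [r [mr r0 rs r_sum]] := density_ratios_of_average V0 ms mt t0 s_avg.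
apply: ge_ereal_sup => _ [nu [f [g [[mf mg] [f0 g0] rep ->]]]].
have msqrt : measurable_fun setT (@Num.sqrt R).
  exact: continuous_measurable_fun (@sqrt_continuous R).
pose phi j x := (2^-1 * (Num.sqrt (f x) - Num.sqrt (g x * r j x)) ^+ 2)%:E.
have mphi j : measurable_fun setT (phi j).
  apply/measurable_EFinP; apply: measurable_funM => //; apply: measurable_funX.
  by apply: measurable_funB; apply: measurableT_comp => //; exact: measurable_funM.
have phi0 j x : (0 <= phi j x)%E by rewrite lee_fin mulr_ge0 ?sqr_ge0.
have msum : measurable_fun setT (fun x => (\sum_(j < V) phi j x)%E).
  exact: emeasurable_sum.
apply: (@le_trans _ _ (\int[nu]_x ((V%:R^-1)%:E * \sum_(j < V) phi j x))%E).
  apply: ge0_le_integral => //.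
  - by move=> x _; rewrite lee_fin mulr_ge0 ?sqr_ge0.
  - apply/measurable_EFinP; apply: measurable_funM => //; apply: measurable_funX.
    by apply: measurable_funB; apply: measurableT_comp.
  - exact: emeasurable_funM.
  move=> x _; rewrite /phi sumEFin -EFinM lee_fin -big_distrr /= [X in _ <= X]mulrCA.
  rewrite ler_wpM2l ?invr_ge0 //.
  under eq_bigr do rewrite sqrtrM //.
  apply: sqr_sub_le_mean_sqr_sub => //.
  by under eq_bigr do rewrite sqr_sqrtr //; exact: r_sum.
rewrite ge0_integralZl ?ge0_integral_sum //; last by move=> x _; exact: sume_ge0.
rewrite lee_wpmul2l ?lee_fin ?invr_ge0 //; apply: lee_sum => j _.
exact: (hellinger2_density_ratio_ub ms s0 (mr j) (r0 j) (rs j) mf mg f0 g0 rep).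
Qed.

End hellinger2_average.

Theorem proposition1 (d : measure_display) (T : measurableType d) (R : realType)
  (mu : {measure set T -> \bar R}) (K : T -> T -> R) (A : seq T -> T -> R)
  (hA : forall (Y : seq T), (0 < size Y)%N ->
          forall x, A Y x = (size Y)%:R^-1 * \sum_(y <- Y) K x y)
  (hAdens : forall (Y : seq T), (0 < size Y)%N -> is_prob_density mu (A Y))
  (V p : nat) (hV : (2 <= V)%N) (hp : (1 <= p)%N)
  (X : 'I_(p * V) -> T) (blk : 'I_(p * V) -> 'I_V)
  (hblk : forall j : 'I_V, #|[pred i | blk i == j]| = p)
  (Ps : probability T R) :
  let shat := A [seq X i | i <- enum 'I_(p * V)] in
  let shat_j := fun j : 'I_V => A [seq X i | i <- enum 'I_(p * V) & blk i != j] in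
  (hellinger2 Ps (dens_measure mu shat)
     <= (V%:R^-1)%:E * \sum_(j < V) hellinger2 Ps (dens_measure mu (shat_j j)))%E.
Proof.
cbv zeta.
have V0 : (0 < V)%N by exact: leq_trans hV.
have full_gt0 : (0 < size [seq X i | i <- enum 'I_(p * V)])%N.
  by rewrite size_map size_enum_ord muln_gt0 hp V0.
have leave_gt0 j : (0 < size [seq X i | i <- enum 'I_(p * V) & blk i != j])%N.
  by rewrite size_leave_block_out hblk subn_gt0 -{1}[p]muln1 ltn_pmul2l.
have [ms _ _] := hAdens _ full_gt0.
apply: hellinger2_le_mean V0 ms _ _ _.
- by move=> j; have [] := hAdens _ (leave_gt0 j).
- by move=> j x; have [_ t0 _] := hAdens _ (leave_gt0 j); exact: t0.
move=> x; rewrite hA // (mean_leave_block_out _ (K x) (erefl _) hV hblk) /=.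
by congr (_ * _); apply: eq_bigr => j _; rewrite hA.
Qed.
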